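(* Let $d,r$ be nonnegative integers such that $r\le\binom{m+d}{d}-r_d$. Then $e_{r+r_d}(d,m)=\overline{e}_r(d,m)$. In particular, $e_r(d,m)=\overline{e}_r(d,m)$ if $d\le q$.
   Context: Let $q$ be a prime power, $\mathbb{F}_q$ the finite field with $q$ elements, $m$ a positive integer. A monomial $\mu\neq1$ in $x_0,\dots,x_m$ written $x_0^{a_0}\cdots x_\ell^{a_\ell}$ with $a_\ell>0$ is projectively reduced if $a_0,\dots,a_{\ell-1}\le q-1$; $1$ is also projectively reduced; a polynomial is projectively reduced if it is an $\mathbb{F}_q$-linear combination of projectively reduced monomials. $r_d$ is the $\mathbb{F}_q$-dimension of the degree-$d$ homogeneous component of the ideal generated by $\{x_i^qx_j-x_ix_j^q:0\le i<j\le m\}$ (this ideal consists of the polynomials generated by homogeneous ones vanishing on $\mathbb{P}^m(\mathbb{F}_q)$; $r_d=0$ for $d\le q$). $e_s(d,m)$ is the maximum of $|V(F_1,\dots,F_s)(\mathbb{F}_q)|$ (the number of points of $\mathbb{P}^m(\mathbb{F}_q)$ where all $F_i$ vanish) over families of $s$ linearly independent homogeneous degree-$d$ polynomials; $\overline{e}_s(d,m)$ is the same maximum restricted to families of $s$ linearly independent projectively reduced homogeneous degree-$d$ polynomials. For $s=0$ the only family is the empty one, giving the value $|\mathbb{P}^m(\mathbb{F}_q)|$. *)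

From HB Require Import structures.
From mathcomp Require Import all_boot all_order all_algebra all_field.
From mathcomp Require Import mpoly.
Set Implicit Arguments. Unset Strict Implicit. Unset Printing Implicit Defensive.
Import GRing.Theory.
Local Open Scope ring_scope.

Section Defs.
Variables (F : finFieldType) (m : nat).
Local Notation P := {mpoly F[m.+1]}.

Definition qF : nat := #|F|.

(* homogeneous of degree d: every monomial in the support has total degree d
   (0 is homogeneous of every degree) *)
Definition homogd (d : nat) (p : P) : bool :=
  all (fun mm : 'X_{1..m.+1} => mdeg mm == d) (msupp p).

(* projectively reduced monomial x_0^{a_0}...x_l^{a_l}, a_l > 0 :
   a_0,...,a_{l-1} <= q-1, i.e. every exponent strictly before a positive
   exponent is <= q-1 (the monomial 1 is reduced vacuously) *)
Definition proj_reduced_mon (mm : 'X_{1..m.+1}) : bool :=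
  [forall i : 'I_m.+1, forall j : 'I_m.+1,
     ((i < j)%N && (0 < mm j)%N) ==> (mm i <= qF.-1)%N].

Definition proj_reduced (p : P) : bool :=
  all proj_reduced_mon (msupp p).

Definition lin_indep (s : nat) (fam : 'I_s -> P) : Prop :=
  forall c : 'I_s -> F, \sum_(i < s) c i *: fam i = 0 -> forall i, c i = 0.

(* points of P^m(F_q), represented by their normalized homogeneous
   coordinates: the first nonzero coordinate equals 1 *)
Definition proj_point (x : {ffun 'I_m.+1 -> F}) : bool :=
  [exists i : 'I_m.+1, (x i == 1) && [forall j : 'I_m.+1, (j < i)%N ==> (x j == 0)]].

Definition nb_zeros (s : nat) (fam : 'I_s -> P) : nat :=
  #|[set x : {ffun 'I_m.+1 -> F} | proj_point x &&
      [forall i : 'I_s, (fam i).@[x] == 0]]|.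

Definition is_e (s d v : nat) : Prop :=
  (exists fam : 'I_s -> P,
      lin_indep fam /\ (forall i, homogd d (fam i)) /\ nb_zeros fam = v) /\
  (forall fam : 'I_s -> P,
      lin_indep fam -> (forall i, homogd d (fam i)) -> (nb_zeros fam <= v)%N).

Definition is_ebar (s d v : nat) : Prop :=
  (exists fam : 'I_s -> P,
      lin_indep fam /\ (forall i, homogd d (fam i) && proj_reduced (fam i)) /\
      nb_zeros fam = v) /\
  (forall fam : 'I_s -> P,
      lin_indep fam -> (forall i, homogd d (fam i) && proj_reduced (fam i)) ->
      (nb_zeros fam <= v)%N).

Definition gens : seq P :=
  [seq 'X_(ij.1) ^+ qF * 'X_(ij.2) - 'X_(ij.1) * 'X_(ij.2) ^+ qF
  | ij <- [seq ij : 'I_m.+1 * 'I_m.+1 <- enum [set: 'I_m.+1 * 'I_m.+1] | (ij.1 < ij.2)%N]].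

Definition in_ideal (p : P) : Prop :=
  exists h : 'I_(size gens) -> P, p = \sum_(k < size gens) h k * gens`_k.

(* rd = r_d: the F_q-dimension of the degree-d homogeneous component of the
   ideal, i.e. of {p in ideal | p homogeneous of degree d} *)
Definition is_rd (d rd : nat) : Prop :=
  (exists fam : 'I_rd -> P,
      lin_indep fam /\ (forall i, in_ideal (fam i) /\ homogd d (fam i))) /\
  (forall (k : nat) (fam : 'I_k -> P),
      lin_indep fam -> (forall i, in_ideal (fam i) /\ homogd d (fam i)) ->
      (k <= rd)%N).

End Defs.

(* Write V_d for the forms of degree d, I_d for those lying in the ideal (so
   dim I_d = r_d) and R_d for the projectively reduced ones.  Modulo the
   generators x_i^q x_j - x_i x_j^q every monomial is congruent to a reduced one,
   and a reduced form vanishing on P^m(F_q) is zero: on the chart x_l = 1,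
   x_j = 0 (j > l) its monomials become distinct monomial functions of degree
   < q in each variable.  Hence V_d is the direct sum of R_d and I_d.  If W is
   spanned by r + r_d independent forms, (W + I_d) :&: R_d has dimension >= r
   and its elements vanish wherever the family does; conversely r independent
   reduced forms together with a basis of I_d are r + r_d independent forms with
   the same zeros.  For d <= q every monomial of degree d is reduced, so
   r_d = 0. *)

From HB Require Import structures.
From mathcomp Require Import all_boot all_order all_algebra all_field.
From mathcomp Require Import mpoly.
From mathcomp Require Import zify.
From Stdlib Require Import Classical.
Set Implicit Arguments. Unset Strict Implicit. Unset Printing Implicit Defensive.
Import GRing.Theory.
Local Open Scope ring_scope.

Lemma ex_maxn_bounded (P : nat -> Prop) (b : nat) : (exists n, P n) ->
  (forall n, P n -> (n <= b)%N) -> exists n, P n /\ forall k, P k -> (k <= n)%N.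
Proof.
elim: b => [|b IHb] [n Pn] P_le.
  by exists n; split=> // k /P_le; rewrite leqn0 => /eqP ->.
have [Pb|nPb] := classic (P b.+1); first by exists b.+1.
apply: IHb => [|k Pk]; first by exists n.
by rewrite -ltnS ltn_neqAle P_le // andbT; apply: contra_not_neq nPb => <-.
Qed.

Section MonomialFunctions.
Variable F : finFieldType.

Lemma vanishing_poly_coef0 (C : nat -> F) :
  (forall t : F, \sum_(a < #|F|) C a * t ^+ a = 0) ->
  forall a, (a < #|F|)%N -> C a = 0.
Proof.
move=> C_vanish a lt_a_q; pose p := \poly_(i < #|F|) C i.
suff p0 : p = 0 by have := coef_poly #|F| C a; rewrite -/p p0 coef0 lt_a_q.
apply/eqP; apply: contraT => p_neq0.
have := max_poly_roots p_neq0 (rs := enum F); rewrite enum_uniq -cardE.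
have -> : all (root p) (enum F).
  by apply/allP => t _; rewrite /root horner_poly C_vanish.
by move=> /(_ isT isT); rewrite ltnNge size_poly.
Qed.

Section Fibres.
Variables (n k : nat) (lt_k_n : (k < n)%N) (s : seq 'X_{1..n}) (c : 'X_{1..n} -> F).
Let K := Ordinal lt_k_n.

Hypothesis small_K : forall e, e \in s -> (e K < #|F|)%N.
Hypothesis sum_vanish : forall y : 'I_n -> F, (forall i : 'I_n, (k < i)%N -> y i = 1) ->
  \sum_(e <- s) c e * \prod_(i < n) y i ^+ e i = 0.

(* Setting [y K = t] turns the sum into a polynomial in [t] of degree [< #|F|]
   whose coefficients are the sums over the fibres of [e |-> e K]. *)
Lemma fibre_sum_vanish a (y : 'I_n -> F) : (a < #|F|)%N ->
  (forall i : 'I_n, (k <= i)%N -> y i = 1) ->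
  \sum_(e <- s | e K == a) c e * \prod_(i < n) y i ^+ e i = 0.
Proof.
move=> lt_a_q y1.
pose C b := \sum_(e <- s | e K == b) c e * \prod_(i < n) y i ^+ e i.
apply: (@vanishing_poly_coef0 C _ a lt_a_q) => t.
pose yt i := if i == K then t else y i.
rewrite -[RHS](sum_vanish (y := yt)); last first.
  move=> i lt_k_i; rewrite /yt ifF ?y1 ?(ltnW lt_k_i) //.
  by apply: contraTF lt_k_i => /eqP ->; rewrite ltnn.
under eq_bigr do rewrite mulr_suml.
rewrite (exchange_big_dep xpredT) //= big_seq [RHS]big_seq; apply: eq_bigr => e e_s.
rewrite (bigD1 (Ordinal (small_K e_s))) //= [X in _ + X]big1 ?addr0; last first.
  by move=> b /andP[/eqP eKb]; rewrite -val_eqE /= eKb eqxx.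
rewrite -mulrA; congr (_ * _).
rewrite (bigD1 K) //= [in RHS](bigD1 K) //= /yt eqxx y1 // expr1n mul1r mulrC.
by congr (_ * _); apply: eq_bigr => i /negbTE ->.
Qed.

End Fibres.

Lemma chart_monomials_coef0 (n k : nat) (s : seq 'X_{1..n}) (c : 'X_{1..n} -> F) :
  (k <= n)%N -> uniq s ->
  (forall e, e \in s -> forall i : 'I_n, (i < k)%N -> (e i < #|F|)%N) ->
  {in s &, forall e e' : 'X_{1..n}, (forall i : 'I_n, (i < k)%N -> e i = e' i) -> e = e'} ->
  (forall y : 'I_n -> F, (forall i : 'I_n, (k <= i)%N -> y i = 1) ->
     \sum_(e <- s) c e * \prod_(i < n) y i ^+ e i = 0) ->
  forall e, e \in s -> c e = 0.
Proof.
elim: k s => [|k IHk] s le_k_n s_uniq small agree sum_vanish e e_s.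
  have := sum_vanish (fun _ => 1) (fun _ _ => erefl).
  have prod1 e' : \prod_(i < n) (1 : F) ^+ e' i = 1.
    by rewrite big1 // => i _; rewrite expr1n.
  rewrite (bigD1_seq e) //= prod1 mulr1 big_seq_cond big1 ?addr0 //.
  by move=> e' /andP[e's /negP[]]; apply/eqP/agree.
pose K := Ordinal le_k_n.
have small_K e' : e' \in s -> (e' K < #|F|)%N by move/small; apply.
apply: (IHk [seq e' <- s | (e' : 'X_{1..n}) K == e K]) => //.
- exact: ltnW.
- exact: filter_uniq.
- by move=> e' /[!mem_filter]/andP[_ /small] small_e' i /ltnW; apply: small_e'.
- move=> e1 e2 /[!mem_filter]/andP[/eqP e1K e1s] /andP[/eqP e2K e2s] e12.
  apply: agree => // i; rewrite ltnS leq_eqVlt => /orP[/eqP ik|]; last exact: e12.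
  have -> : i = K by apply: val_inj.
  by rewrite e1K e2K.
- move=> y y1; rewrite big_filter.
  exact: (fibre_sum_vanish small_K sum_vanish (small_K _ e_s) y1).
- by rewrite mem_filter e_s eqxx.
Qed.

End MonomialFunctions.

Lemma dimv_cap_ge (K : fieldType) (vT : vectType K) (U V : {vspace vT}) :
  (\dim U + \dim V <= \dim (U :&: V) + \dim (fullv : {vspace vT}))%N.
Proof. by rewrite -dimv_sum_cap addnC leq_add2l dimvS ?subvf. Qed.

Section Support.
Variable n : nat.

Definition mon_within (l : nat) (nu : 'X_{1..n}) :=
  [forall j : 'I_n, (l < j)%N ==> (nu j == 0%N)].

Lemma mon_withinP l (nu : 'X_{1..n}) :
  reflect (forall j : 'I_n, (l < j)%N -> nu j = 0%N) (mon_within l nu).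
Proof.
apply: (iffP forallP) => nu0 j; first by move/(implyP (nu0 j))/eqP.
by apply/implyP => /nu0 ->.
Qed.

Lemma mdeg_eq_agree (nu nu' : 'X_{1..n}) (L : 'I_n) : mdeg nu = mdeg nu' ->
  (forall j, j != L -> nu j = nu' j) -> nu = nu'.
Proof.
rewrite !mdegE (bigD1 L) //= [X in _ = X -> _](bigD1 L) //= => deg_eq agree.
have sum_eq : (\sum_(j | j != L) nu j = \sum_(j | j != L) nu' j)%N.
  by apply: eq_bigr => j /agree.
apply/mnmP => j; have [->|/agree //] := eqVneq j L.
by move: deg_eq; rewrite sum_eq => /addIn.
Qed.

Lemma meval_within (R : comNzRingType) (p : {mpoly R[n]}) (l : nat) (x : 'I_n -> R) :
  (forall j : 'I_n, (l < j)%N -> x j = 0) ->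
  p.@[x] = \sum_(nu <- msupp p | mon_within l nu) p@_nu * \prod_(i < n) x i ^+ nu i.
Proof.
move=> x0; rewrite mevalE (bigID (mon_within l)) /= [X in _ + X]big1 ?addr0 // => nu.
rewrite negb_forall => /existsP[j]; rewrite negb_imply => /andP[lt_l_j nu_j].
by rewrite (bigD1 j) //= x0 // expr0n (negbTE nu_j) mul0r mulr0.
Qed.

End Support.

Section Projective.
Variables (F : finFieldType) (m : nat).
Local Notation P := {mpoly F[m.+1]}.
Local Notation q := (qF F).

Lemma in_ideal0 : in_ideal (0 : P).
Proof. by exists (fun _ => 0); rewrite big1 // => k _; rewrite mul0r. Qed.

Lemma in_idealD (p1 p2 : P) : in_ideal p1 -> in_ideal p2 -> in_ideal (p1 + p2).
Proof.
move=> [h1 ->] [h2 ->]; exists (fun k => h1 k + h2 k); rewrite -big_split.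
by apply: eq_bigr => k _; rewrite mulrDl.
Qed.

Lemma in_ideal_gen (g : P) (nu : 'X_{1..m.+1}) : g \in gens F m ->
  in_ideal ('X_[nu] * g).
Proof.
move=> g_gen; have lt_g := g_gen; rewrite -index_mem in lt_g.
exists (fun k' => if k' == Ordinal lt_g then 'X_[nu] else 0).
rewrite (bigD1 (Ordinal lt_g)) //= eqxx nth_index // big1 ?addr0 // => k' /negbTE ->.
by rewrite mul0r.
Qed.

Lemma gen_in_gens (i j : 'I_m.+1) : (i < j)%N ->
  'X_i ^+ q * 'X_j - 'X_i * 'X_j ^+ q \in gens F m.
Proof. by move=> lt_ij; apply/mapP; exists (i, j); rewrite // mem_filter lt_ij mem_enum inE. Qed.

Lemma in_ideal_meval0 (p : P) (x : 'I_m.+1 -> F) : in_ideal p -> p.@[x] = 0.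
Proof.
have gen0 (g : P) : g \in gens F m -> g.@[x] = 0.
  case/mapP=> ij _ ->.
  by rewrite mevalB !mevalM !rmorphXn /= !mevalXU /qF !expf_card subrr.
case=> h ->; rewrite raddf_sum /=; apply: big1 => k _.
by rewrite mevalM [X in _ * X]gen0 ?mulr0 // mem_nth.
Qed.

Definition shift_weight (mu : 'X_{1..m.+1}) := (\sum_(i < m.+1) mu i * (m - i))%N.

Lemma shift_weightD mu nu : shift_weight (mu + nu) = (shift_weight mu + shift_weight nu)%N.
Proof. by rewrite -big_split; apply: eq_bigr => i _; rewrite mnmDE mulnDl. Qed.

Lemma shift_weightMn mu k : shift_weight (mu *+ k) = (shift_weight mu * k)%N.
Proof. by rewrite big_distrl; apply: eq_bigr => i _ /=; rewrite mulmnE mulnAC. Qed.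

Lemma shift_weight1 (i : 'I_m.+1) : shift_weight U_(i) = (m - i)%N.
Proof.
rewrite /shift_weight (bigD1 i) //= big1 ?addn0 => [|j /negbTE nij].
  by rewrite mnm1E eqxx mul1n.
by rewrite mnm1E eq_sym nij.
Qed.

(* [x_i^a x_j^b] with [a >= q], [b > 0], [i < j] is congruent to
   [x_i^(a-q+1) x_j^(b+q-1)], which has a smaller [shift_weight]. *)
Lemma reduce_mon_step (mu : 'X_{1..m.+1}) : ~~ proj_reduced_mon F mu ->
  exists2 mu', mdeg mu' = mdeg mu /\ (shift_weight mu' < shift_weight mu)%N
             & in_ideal ('X_[mu] - 'X_[mu'] : P).
Proof.
rewrite negb_forall => /existsP[i]; rewrite negb_forall => /existsP[j].
rewrite negb_imply => /andP[/andP[lt_ij mu_j] mu_i].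
have q_gt1 : (1 < q)%N := card_finNzRing_gt1 F.
have nij : i != j by rewrite neq_ltn lt_ij.
pose nu := (mu - (U_(i) *+ q + U_(j)))%MM.
have mu_nu : mu = (nu + (U_(i) *+ q + U_(j)))%MM.
  apply/mnmP => l; rewrite mnmDE mnmBE subnK // mnmDE mulmnE !mnm1E.
  have [<-|nil] := eqVneq i l; first by rewrite eq_sym (negbTE nij); lia.
  by have [<-|] := eqVneq j l; rewrite mul0n //; lia.
exists (nu + (U_(i) + U_(j) *+ q))%MM; last first.
  have -> : ('X_[mu] - 'X_[nu + (U_(i) + U_(j) *+ q)] : P) =
      'X_[nu] * ('X_i ^+ q * 'X_j - 'X_i * 'X_j ^+ q).
    by rewrite mu_nu !mpolyXD !mpolyXn mulrBr !mulrA.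
  exact/in_ideal_gen/gen_in_gens.
rewrite [in mdeg mu]mu_nu [in shift_weight mu]mu_nu !mdegD !mdegMn !mdeg1.
rewrite !shift_weightD !shift_weightMn !shift_weight1.
have lt_mji : (m - j < m - i)%N by have := ltn_ord j; lia.
split; [lia | nia].
Qed.

Lemma reduce_mon (mu : 'X_{1..m.+1}) : exists mu',
  [/\ proj_reduced_mon F mu', mdeg mu' = mdeg mu & in_ideal ('X_[mu] - 'X_[mu'] : P)].
Proof.
elim: {mu}(shift_weight mu).+1 {-2}mu (ltnSn (shift_weight mu)) => // w IHw mu lt_mu_w.
have [mu_red|/reduce_mon_step[mu1 [deg1 lt_w1] mu_mu1]] := boolP (proj_reduced_mon F mu).
  by exists mu; rewrite subrr; split=> //; apply: in_ideal0.
have [|mu' [mu'_red deg' mu1_mu']] := IHw mu1; first exact: leq_trans lt_w1 _.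
exists mu'; split; rewrite ?deg' //.
by rewrite -[_ - _](subrKA 'X_[mu1]); apply: in_idealD.
Qed.

Lemma homogdE d (p : P) : homogd d p = (p \is d.-homog).
Proof. by rewrite dhomogE. Qed.

Section ReducedVanishing.
Variables (d : nat) (f : P).
Hypotheses (f_homog : homogd d f)
  (f_vanish : forall x : 'I_m.+1 -> F, (exists i, x i != 0) -> f.@[x] = 0).

(* On the chart [x_l = 1, x_j = 0 for j > l] the monomials of [f] involving only
   [x_0, ..., x_l] are determined, by homogeneity, by their exponents of
   [x_0, ..., x_(l-1)]. *)
Lemma chart_coef0 l (lt_l_m : (l < m.+1)%N) :
  {in msupp f, forall mu, mon_within l mu -> forall i : 'I_m.+1, (i < l)%N -> (mu i < q)%N} ->
  forall mu, mon_within l mu -> f@_mu = 0.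
Proof.
move=> small mu mu_l; pose L := Ordinal lt_l_m.
have [mu_f|] := boolP (mu \in msupp f); last by rewrite mcoeff_msupp negbK => /eqP.
pose s := [seq nu <- msupp f | mon_within l nu].
apply: (@chart_monomials_coef0 F m.+1 l s (fun nu => f@_nu)); rewrite ?mem_filter ?mu_f ?mu_l //.
- exact: ltnW.
- exact/filter_uniq/msupp_uniq.
- by move=> nu /[!mem_filter] /andP[nu_l nu_f]; apply: small.
- move=> nu nu' /[!mem_filter] /andP[/mon_withinP nu_l nu_f] /andP[/mon_withinP nu'_l nu'_f] agree.
  apply: (mdeg_eq_agree (L := L)).
    by rewrite (eqP (allP f_homog _ nu_f)) (eqP (allP f_homog _ nu'_f)).
  move=> j /eqP neq_jL; case: (ltngtP j l) => [|lt_l_j|eq_jl]; first exact: agree.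
    by rewrite nu_l ?nu'_l.
  by case: neq_jL; apply: val_inj.
- move=> y y1; pose x (i : 'I_m.+1) := if (l < i)%N then 0 else y i.
  transitivity f.@[x]; last by apply: f_vanish; exists L; rewrite /x ltnn y1 ?oner_eq0.
  rewrite (meval_within _ (l := l)) => [|j]; last by rewrite /x => ->.
  rewrite big_filter; apply: eq_bigr => nu /mon_withinP nu_l.
  congr (_ * _); apply: eq_bigr => i _; rewrite /x.
  by case: ltnP => // /nu_l ->; rewrite !expr0.
Qed.

Lemma reduced_vanishing_eq0 : proj_reduced f -> f = 0.
Proof.
move=> f_red; suff coef0 l : (l < m.+1)%N -> forall mu, mon_within l mu -> f@_mu = 0.
  apply/mpolyP => mu; rewrite mcoeff0 (coef0 m) //.
  by apply/mon_withinP => j; rewrite ltnNge -ltnS ltn_ord.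
elim: l => [|l IHl] lt_l_m; apply: chart_coef0 => // mu mu_f mu_l i lt_i_l.
have mu_L : (0 < mu (Ordinal lt_l_m))%N.
  rewrite lt0n; apply: contraTneq mu_f => mu_L0.
  rewrite mcoeff_msupp negbK IHl ?(ltnW lt_l_m) //; apply/mon_withinP => j.
  rewrite leq_eqVlt => /orP[/eqP eq_lj|/(mon_withinP _ _ mu_l)//].
  by rewrite -mu_L0; congr (mu _); apply: val_inj.
have := forallP (forallP (allP f_red mu mu_f) i) (Ordinal lt_l_m).
rewrite /= lt_i_l mu_L /= => /leq_ltn_trans; apply.
by rewrite prednK ?(ltnW (card_finNzRing_gt1 F)).
Qed.

End ReducedVanishing.

Lemma nb_zeros_le s t (fam : 'I_s -> P) (G : 'I_t -> P) :
  (forall x : 'I_m.+1 -> F, (forall j, (fam j).@[x] = 0) -> forall i, (G i).@[x] = 0) ->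
  (nb_zeros fam <= nb_zeros G)%N.
Proof.
move=> zeros_sub; apply/subset_leq_card/subsetP => x.
rewrite !inE => /andP[-> /forallP fam_x] /=; apply/forallP => i; apply/eqP.
by apply: zeros_sub => j; apply/eqP.
Qed.

Lemma lin_indep_neq0 s (fam : 'I_s -> P) i : lin_indep fam -> fam i != 0.
Proof.
move=> fam_indep; apply/eqP => fam_i0.
have sum0 : \sum_j (j == i)%:R *: fam j = 0.
  by rewrite (bigD1 i) //= fam_i0 scaler0 add0r big1 // => j /negbTE ->; rewrite scale0r.
by have /eqP := fam_indep _ sum0 i; rewrite eqxx oner_eq0.
Qed.

Section Forms.
Variable d : nat.
Local Notation V := (dhomog m.+1 F d).

Definition toV (p : P) : V := insubd 0 p.

Lemma toVK (p : P) : homogd d p -> val (toV p) = p.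
Proof. by rewrite homogdE => p_homog; rewrite insubdK. Qed.

Lemma homogd_val (v : V) : homogd d (val v).
Proof. by rewrite homogdE; case: v. Qed.

Lemma homogd_X (mu : 'X_{1..m.+1}) : homogd d ('X_[mu] : P) = (mdeg mu == d).
Proof. by rewrite homogdE dhomogX. Qed.

Lemma free_lin_indep (X : seq V) n : size X = n -> free X ->
  lin_indep (fun i : 'I_n => val X`_i).
Proof.
move=> <- X_free c sum0; apply: (@freeP _ _ _ (in_tuple X) X_free) => /=; apply: val_inj.
by rewrite linear_sum linear0 -[X in _ = X]sum0; apply: eq_bigr => i _; rewrite linearZ.
Qed.

Lemma lin_indep_free s (fam : 'I_s -> P) : (forall i, homogd d (fam i)) ->
  lin_indep fam -> free [tuple toV (fam i) | i < s].
Proof.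
move=> fam_homog fam_indep; apply/freeP => c sum0; apply: fam_indep.
have := congr1 val sum0; rewrite linear_sum linear0 => val_sum0.
rewrite -[X in _ = X]val_sum0; apply: eq_bigr => i _.
by rewrite linearZ -tnth_nth tnth_mktuple /= toVK.
Qed.

Lemma span_vanish (X : seq V) (x : 'I_m.+1 -> F) :
  {in X, forall v, (val v).@[x] = 0} -> {in <<X>>%VS, forall v, (val v).@[x] = 0}.
Proof.
move=> X0 v /(coord_span (X := in_tuple X)) ->; rewrite linear_sum raddf_sum big1 // => i _.
by rewrite /= mevalZ X0 ?mulr0 // mem_nth.
Qed.

Lemma mpolyE_toV (v : V) : v = \sum_(mu <- msupp (val v)) (val v)@_mu *: toV 'X_[mu].
Proof.
apply: val_inj; rewrite {1}(mpolyE (val v)) linear_sum /=.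
apply: eq_big_seq => mu mu_v; rewrite /= toVK // homogd_X.
exact: (allP (homogd_val v)).
Qed.

Lemma vspace_lin_indep (U : {vspace V}) r : (r <= \dim U)%N ->
  exists G : 'I_r -> V, lin_indep (fun i => val (G i)) /\ forall i, G i \in U.
Proof.
move=> le_r_U; pose X := take r (vbasis U).
have X_free : free X.
  by move: (basis_free (vbasisP U)); rewrite -(cat_take_drop r (vbasis U)) => /catl_free.
have X_size : size X = r by rewrite size_takel // size_tuple.
exists (fun i : 'I_r => X`_i); split; first exact: free_lin_indep.
by move=> i; apply/vbasis_mem/mem_take/mem_nth; rewrite X_size.
Qed.

Lemma dim_fullV : \dim (fullv : {vspace V}) = 'C(m + d, d).
Proof. by rewrite dimvf addnC. Qed.

Definition reducedV :=
  <<[seq toV 'X_[mu] | mu <- [seq s2m t | t : d.-tuple 'I_m.+1 <- enum (basis m.+1 d)]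
                     & proj_reduced_mon F mu]>>%VS.

Lemma reducedVP v : reflect (proj_reduced (val v)) (v \in reducedV).
Proof.
apply: (iffP idP) => [/(coord_span (X := in_tuple _)) -> | v_red]; last first.
  rewrite (mpolyE_toV v) big_seq; apply: memv_suml => mu mu_v.
  apply/memvZ/memv_span/map_f; rewrite mem_filter (allP v_red) //= -basis_cover.
  exact: (allP (homogd_val v)).
apply/allP => mu; rewrite mcoeff_msupp; apply: contraR => mu_nred.
rewrite linear_sum raddf_sum big1 // => i _ /=; rewrite mcoeffZ.
case/mapP: (mem_nth 0 (ltn_ord i)) => nu; rewrite mem_filter => /andP[nu_red nu_d] ->.
rewrite toVK ?mcoeffX; last by rewrite homogd_X basis_cover.
by case: eqP => [nu_mu|]; [rewrite nu_mu (negbTE mu_nred) in nu_red | rewrite mulr0].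
Qed.

Section IdealPart.
Variables (rd : nat) (B : 'I_rd -> P).
Hypotheses (B_indep : lin_indep B) (B_ideal : forall i, in_ideal (B i) /\ homogd d (B i))
  (B_max : forall k (fam : 'I_k -> P), lin_indep fam ->
     (forall i, in_ideal (fam i) /\ homogd d (fam i)) -> (k <= rd)%N).

Let B_homog i : homogd d (B i) := (B_ideal i).2.

Definition idealV := <<[tuple toV (B i) | i < rd]>>%VS.

Lemma dim_idealV : \dim idealV = rd.
Proof. by rewrite (eqP (lin_indep_free B_homog B_indep)) size_tuple. Qed.

Lemma idealV_vanish x : {in idealV, forall v, (val v).@[x] = 0}.
Proof.
apply: span_vanish => _ /mapP[i _ ->]; rewrite toVK //.
exact: in_ideal_meval0 (B_ideal i).1.
Qed.

Lemma ideal_in_idealV v : in_ideal (val v) -> v \in idealV.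
Proof.
move=> v_ideal; apply: contraT => v_notin.
have vB_free : free (v :: [tuple toV (B i) | i < rd]).
  by rewrite free_cons v_notin (lin_indep_free B_homog B_indep).
suff : (size (v :: [tuple toV (B i) | i < rd]) <= rd)%N.
  by rewrite /= size_tuple card_ord ltnn.
apply: B_max; first exact: free_lin_indep (erefl _) vB_free.
move=> i; split; last exact: homogd_val.
have /predU1P[->//|/mapP[j _ ->]] := mem_nth 0 (ltn_ord i).
by rewrite toVK //; apply: (B_ideal j).1.
Qed.

Lemma reducedV_idealV_cap0 : (reducedV :&: idealV = 0)%VS.
Proof.
apply/eqP; rewrite -subv0; apply/subvP => v /[!memv_cap] /andP[/reducedVP v_red v_ideal].
rewrite memv0 -(inj_eq val_inj) linear0; apply/eqP.
apply: reduced_vanishing_eq0 v_red => [|x _]; first exact: homogd_val.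
exact: idealV_vanish.
Qed.

Lemma reducedV_idealV_full : (reducedV + idealV = fullv)%VS.
Proof.
apply/eqP; rewrite eqEsubv subvf; apply/subvP => v _.
rewrite (mpolyE_toV v) big_seq; apply: memv_suml => mu mu_v; apply: memvZ.
have [mu' [mu'_red deg_mu' mu_mu']] := reduce_mon mu.
have mu_d : mdeg mu = d by apply/eqP; apply: (allP (homogd_val v)).
have X_homog nu : mdeg nu = d -> homogd d ('X_[nu] : P) by rewrite homogd_X => ->.
have mu_homog := X_homog _ mu_d.
have mu'_homog : homogd d ('X_[mu'] : P) by apply: X_homog; rewrite deg_mu'.
have diff_homog : homogd d ('X_[mu] - 'X_[mu'] : P) by rewrite homogdE rpredB // -homogdE.
have -> : toV 'X_[mu] = toV 'X_[mu'] + toV ('X_[mu] - 'X_[mu']).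
  by apply: val_inj; rewrite raddfD /= !toVK // addrC subrK.
apply: memv_add; last by apply: ideal_in_idealV; rewrite toVK.
by apply/reducedVP; rewrite toVK // /proj_reduced msuppX /= mu'_red.
Qed.

Lemma dim_reducedV : (\dim reducedV + rd = 'C(m + d, d))%N.
Proof.
have := dimv_sum_cap reducedV idealV.
by rewrite reducedV_idealV_full reducedV_idealV_cap0 dimv0 dim_fullV dim_idealV addn0.
Qed.

Lemma reduced_family_exists r : (r <= 'C(m + d, d) - rd)%N ->
  exists G : 'I_r -> P, lin_indep G /\ (forall i, homogd d (G i) && proj_reduced (G i)).
Proof.
rewrite -dim_reducedV addnK => /vspace_lin_indep[G [G_indep G_red]].
exists (fun i => val (G i)); split=> // i.
by rewrite homogd_val; apply/reducedVP.
Qed.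

Lemma reduced_family_upper r (fam : 'I_(r + rd) -> P) :
  lin_indep fam -> (forall i, homogd d (fam i)) ->
  exists G : 'I_r -> P, [/\ lin_indep G, (forall i, homogd d (G i) && proj_reduced (G i))
                          & (nb_zeros fam <= nb_zeros G)%N].
Proof.
move=> fam_indep fam_homog; pose W := <<[tuple toV (fam i) | i < r + rd]>>%VS.
have dim_W : \dim W = (r + rd)%N.
  by rewrite (eqP (lin_indep_free fam_homog fam_indep)) size_tuple ?card_ord.
have S_dim : (r <= \dim ((W + idealV) :&: reducedV))%N.
  have := dimv_cap_ge (W + idealV) reducedV; have := dimvS (addvSl W idealV).
  by rewrite dim_fullV -dim_reducedV dim_W; lia.
have [G [G_indep G_S]] := vspace_lin_indep S_dim.
exists (fun i => val (G i)); split=> [//|i|].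
  by have /[!memv_cap] /andP[_ /reducedVP ->] := G_S i; rewrite homogd_val.
apply: nb_zeros_le => x fam_x i.
have /[!memv_cap] /andP[/memv_addP[w w_W [u u_ideal ->]] _] := G_S i.
rewrite raddfD /= (idealV_vanish _ u_ideal) addr0; apply: (span_vanish _ w_W).
by move=> _ /mapP[j _ ->]; rewrite toVK.
Qed.

Lemma reduced_family_lower r (G : 'I_r -> P) :
  lin_indep G -> (forall i, homogd d (G i) && proj_reduced (G i)) ->
  exists H : 'I_(r + rd) -> P,
    [/\ lin_indep H, (forall i, homogd d (H i)) & nb_zeros H = nb_zeros G].
Proof.
move=> G_indep G_red; have G_homog i := andP (G_red i) : homogd d (G i) /\ _.
pose GT := [tuple toV (G i) | i < r]; pose X := GT ++ [tuple toV (B i) | i < rd].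
have GT_reduced : (<<GT>> <= reducedV)%VS.
  by apply/span_subvP => _ /mapP[i _ ->]; apply/reducedVP; rewrite toVK //; case: (G_homog i).
have X_free : free X.
  rewrite cat_free (lin_indep_free _ G_indep) ?(lin_indep_free B_homog B_indep) //=; last first.
    by move=> i; case: (G_homog i).
  apply/directv_addP/eqP; rewrite -subv0 -reducedV_idealV_cap0; exact: capvS.
have X_size : size X = (r + rd)%N by rewrite size_cat !size_tuple ?card_ord.
exists (fun i => val X`_i); split=> [|i|]; [exact: free_lin_indep | exact: homogd_val |].
have GX i : G i = val X`_(lshift rd i).
  by rewrite nth_cat size_tuple ?card_ord /= ltn_ord nth_mktuple toVK //; case: (G_homog i).
apply/eqP; rewrite eqn_leq; apply/andP; split; apply: nb_zeros_le => x zeros_x i.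
  by rewrite GX zeros_x.
have : X`_i \in X by rewrite mem_nth // X_size.
rewrite mem_cat => /orP[/mapP[j _ ->] | /mapP[j _ ->]]; rewrite toVK ?zeros_x //.
  by case: (G_homog j).
exact: in_ideal_meval0 (B_ideal j).1.
Qed.

Lemma is_e_of_is_ebar r v : is_ebar F m r d v -> is_e F m (r + rd) d v.
Proof.
case=> [[G [G_indep [G_red <-]]] ebar_max]; split.
  have [H [H_indep H_homog H_zeros]] := reduced_family_lower G_indep G_red.
  by exists H.
move=> fam fam_indep fam_homog.
have [G' [G'_indep G'_red le_zeros]] := reduced_family_upper fam_indep fam_homog.
exact: leq_trans le_zeros (ebar_max _ G'_indep G'_red).
Qed.

End IdealPart.
End Forms.

Lemma is_ebar_exists r d :
  (exists G : 'I_r -> P, lin_indep G /\ (forall i, homogd d (G i) && proj_reduced (G i))) ->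
  exists v, is_ebar F m r d v.
Proof.
move=> [G [G_indep G_red]].
pose achieved v := exists G : 'I_r -> P,
  [/\ lin_indep G, forall i, homogd d (G i) && proj_reduced (G i) & nb_zeros G = v].
have achieved_G : achieved (nb_zeros G) by exists G.
have achieved_le v : achieved v -> (v <= #|{ffun 'I_m.+1 -> F}|)%N.
  by move=> [G' [_ _ <-]]; apply: max_card.
have [v [[G' [G'_indep G'_red G'_zeros]] v_max]] :=
  ex_maxn_bounded (ex_intro _ _ achieved_G) achieved_le.
exists v; split=> [|fam fam_indep fam_red]; first by exists G'.
by apply: v_max; exists fam.
Qed.

Lemma homogd_small_reduced d (p : P) : (d <= q)%N -> homogd d p -> proj_reduced p.
Proof.
move=> le_d_q /allP p_homog; apply/allP => mu /p_homog /eqP mu_d.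
apply/forallP => i; apply/forallP => j; apply/implyP => /andP[lt_ij mu_j].
have : (mu i + mu j <= mdeg mu)%N.
  rewrite mdegE (bigD1 i) //= (bigD1 j) /=; last by rewrite eq_sym neq_ltn lt_ij.
  by rewrite addnA leq_addr.
rewrite mu_d; lia.
Qed.

Lemma is_rd_small d : (d <= q)%N -> is_rd F m d 0.
Proof.
move=> le_d_q; split; first by exists (fun i : 'I_0 => 0); split=> [c _ []|[]].
case=> // k fam fam_indep fam_ideal; have [fam0_ideal fam0_homog] := fam_ideal ord0.
have fam0_eq0 : fam ord0 = 0.
  apply: (reduced_vanishing_eq0 fam0_homog) => [x _|]; first exact: in_ideal_meval0.
  exact: homogd_small_reduced fam0_homog.
by have := lin_indep_neq0 ord0 fam_indep; rewrite fam0_eq0 eqxx.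
Qed.

End Projective.

Theorem theorem5p2 (F : finFieldType) (m : nat) (hm : (0 < m)%N) :
  (forall (d r rd : nat), is_rd F m d rd ->
     (r <= 'C(m + d, d) - rd)%N ->
     exists v : nat, is_e F m (r + rd) d v /\ is_ebar F m r d v) /\
  (forall (d r : nat), (d <= qF F)%N -> (r <= 'C(m + d, d))%N ->
     exists v : nat, is_e F m r d v /\ is_ebar F m r d v).
Proof.
have ebar_e d r rd : is_rd F m d rd -> (r <= 'C(m + d, d) - rd)%N ->
    exists v : nat, is_e F m (r + rd) d v /\ is_ebar F m r d v.
  move=> [[B [B_indep B_ideal]] B_max] le_r.
  have [v v_ebar] := is_ebar_exists (reduced_family_exists B_indep B_ideal B_max le_r).
  by exists v; split=> //; apply: (is_e_of_is_ebar B_indep B_ideal B_max v_ebar).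
split=> // d r le_d_q le_r.
by have := ebar_e d r 0 (is_rd_small m le_d_q); rewrite subn0 addn0; apply.
Qed.
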